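(* Let $A$ be a finite tree rooted at $e$, with all arcs directed from the root towards the leaves, and let $R\subseteq V(A)$ be a set of destinations containing all leaves of $A$. Let $u\neq e$ be a vertex of $A$ having $\ell$ children $u_1,\dots,u_\ell$, and let $D\subseteq V(A)$. If $D$ is sub-optimal for $u$, then $D$ is sub-optimal for $u_i$ for every $i$, $1\le i\le\ell$.
   Context: Setting (multicast with diffusing nodes): $A$ is a multicast tree for a request $(e,R)$: a tree rooted at the source $e$, arcs directed away from $e$, whose leaves lie in the destination set $R$. A set $D\subseteq V(A)$ is a set of diffusing (branching) nodes. The solution $\mathcal{S}(D)$ is a set of directed paths in $A$ such that: every node of $R$ is the final extremity of exactly one path; every node of $D$ is the final extremity of at most one path; the origin of each path is either $e$ or a node of $D$ which is itself the final extremity of some path; a node of $D$ lies on a path only as its origin or final extremity. As in the paper, $\mathcal{S}(D)$ is taken to be the solution in which each vertex $x\neq e$ of $R\cup D$ is the final extremity of exactly one path, whose origin is the nearest proper ancestor of $x$ belonging to $D\cup\{e\}$. For a vertex $u$, $A^u$ is the subtree of $A$ rooted at $u$, and for $u\neq e$, $a^u$ is the arc joining the parent of $u$ to $u$. The path number $\mathrm{pn}(u)$ is the number of paths of $\mathcal{S}(D)$ that pass through $u$ or terminate at $u$. The window of $\mathcal{S}(D)$ on arc $a^u$ is the triple $(\mathrm{pn}(u),\ |D\cap V(A^u)|,\ \mathrm{load})$, where $\mathrm{load}=\sum_{w\in V(A^u)}\mathrm{pn}(w)$ is the load of $\mathcal{S}(D)$ in $A^u$ (the number of pairs (path, arc)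 with the path using the arc, over the arcs of $A^u$ together with $a^u$). Sub-optimality: $D$ is sub-optimal for a vertex $u\neq e$ (i.e. for $A^u$) iff for every $D'\subseteq V(A)$ whose window $(b',d',\mathrm{load}')$ on $a^u$ satisfies $b'=b$ and $d'=d$, one has $\mathrm{load}\le\mathrm{load}'$, where $(b,d,\mathrm{load})$ is the window of $\mathcal{S}(D)$ on $a^u$. *)

From mathcomp Require Import all_boot.
Set Implicit Arguments. Unset Strict Implicit. Unset Printing Implicit Defensive.

(* A finite rooted tree on the vertex finType V is given by its root e and a
   parent map par : V -> V; its arcs are (par v, v) for v <> e, directed away
   from the root. *)
Definition is_rooted_tree (V : finType) (e : V) (par : V -> V) : Prop :=
  par e = e /\ forall v : V, exists k : nat, iter k par v = e.

Section Tree.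
Variables (V : finType) (e : V) (par : V -> V).

(* w is an ancestor of x (reflexive): w = par^k x for some k < |V|
   (depths in a tree on |V| vertices are < |V|). *)
Definition anc (w x : V) : bool := [exists k : 'I_#|V|, iter k par x == w].
Definition sanc (w x : V) : bool := anc w x && (w != x).
Definition child (w v : V) : bool := (w != e) && (par w == v).
Definition leaf (v : V) : bool := [forall w, ~~ child w v].
Definition subtree (u : V) : {set V} := [set w | anc u w].

Variables (R D : {set V}).
(* branching points available as path origins *)
Definition origin_pt (a : V) : bool := (a \in D) || (a == e).
Definition nearest_origin (a x : V) : bool :=
  [&& sanc a x, origin_pt a &
      [forall y, (sanc a y && sanc y x) ==> ~~ origin_pt y]].
(* The solution S(D): one path for each x ≠ e in R ∪ D, from its nearest
   proper ancestor in D ∪ {e} to x.  The path of x passes through or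
   terminates at w iff w lies on it and is not its origin. *)
Definition path_hits (x w : V) : bool :=
  [exists a, nearest_origin a x && sanc a w && anc w x].
Definition pn (w : V) : nat :=
  #|[set x | [&& x \in R :|: D, x != e & path_hits x w]]|.
(* load of S(D) in A^u (arcs of A^u together with a^u) *)
Definition load (u : V) : nat := \sum_(w in subtree u) pn w.
Definition window (u : V) : nat * nat * nat :=
  (pn u, #|D :&: subtree u|, load u).
End Tree.

Definition suboptimal (V : finType) (e : V) (par : V -> V) (R D : {set V})
  (u : V) : Prop :=
  forall D' : {set V},
    (window e par R D' u).1.1 = (window e par R D u).1.1 ->
    (window e par R D' u).1.2 = (window e par R D u).1.2 ->
    (window e par R D u).2 <= (window e par R D' u).2.

(* Exchange argument.  Given D' with the same window as D on the arc of a
   child u_i of u, graft D' into D below u_i.  Path numbers inside A^{u_i}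
   depend only on the diffusing nodes inside A^{u_i}, those at the remaining
   vertices of A^u only on the diffusing nodes outside A^{u_i}; and pn(u) is
   unchanged because the paths crossing u into A^{u_i} are exactly those
   crossing u_i when u is not diffusing, and none when it is.  So the grafted
   set has the same window as D on a^u, and its load in A^u differs from that
   of D by load_{D'}(A^{u_i}) - load_D(A^{u_i}); sub-optimality for u forces
   this difference to be nonnegative. *)
From mathcomp Require Import all_boot.
Set Implicit Arguments. Unset Strict Implicit. Unset Printing Implicit Defensive.

Section RootedTree.
Variables (V : finType) (e : V) (par : V -> V).
Hypothesis tree : is_rooted_tree e par.

Lemma iter_par_root k : iter k par e = e.
Proof. by case: tree => par_e _; elim: k => //= k ->. Qed.

Lemma ancP w x : reflect (exists k, iter k par x = w) (anc par w x).
Proof.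
apply: (iffP existsP) => [[k /eqP <-]|[k <-]]; first by exists k.
have reach : fconnect par x (iter k par x) by apply: fconnect_iter.
have k_lt := leq_trans (findex_max reach) (max_card _).
by exists (Ordinal k_lt); rewrite /= iter_findex.
Qed.

Lemma anc_refl x : anc par x x.
Proof. by apply/ancP; exists 0. Qed.

Lemma anc_par x : anc par (par x) x.
Proof. by apply/ancP; exists 1. Qed.

Lemma anc_trans a w x : anc par a w -> anc par w x -> anc par a x.
Proof.
by move=> /ancP[l <-] /ancP[k <-]; apply/ancP; exists (l + k); rewrite iterD.
Qed.

Lemma iter_par_cycle n w : 0 < n -> iter n par w = w -> w = e.
Proof.
move=> n_gt0 cyc; case: tree => _ /(_ w) [m w_e].
have iter_mul t : iter (n * t) par w = w.
  by elim: t => [|t IH]; rewrite ?muln0 // mulnS iterD IH cyc.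
have le_m : m <= n * m by rewrite leq_pmull.
by rewrite -(iter_mul m) -(subnK le_m) iterD w_e iter_par_root.
Qed.

Lemma anc_antisym a w : anc par a w -> anc par w a -> a = w.
Proof.
move=> /ancP[[|k] aw] /ancP[l wa]; first by rewrite -aw.
have w_e : w = e by apply: (@iter_par_cycle (l + k.+1)); [rewrite addnS | rewrite iterD aw].
by rewrite -aw w_e iter_par_root.
Qed.

Lemma anc_total a w x : anc par a x -> anc par w x -> anc par a w || anc par w a.
Proof.
move=> /ancP[i <-] /ancP[j <-]; case: (leqP i j) => [le_ij|/ltnW le_ji].
  by apply/orP; right; apply/ancP; exists (j - i); rewrite -iterD subnK.
by apply/orP; left; apply/ancP; exists (i - j); rewrite -iterD subnK.
Qed.

Lemma anc_par_neq y c : anc par y c -> y != c -> anc par y (par c).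
Proof.
move=> /ancP[[|k] yc] y_neq; first by rewrite -yc eqxx in y_neq.
by apply/ancP; exists k; rewrite -iterSr.
Qed.

Lemma anc_of_root w : anc par w e -> w = e.
Proof. by move=> /ancP[k <-]; rewrite iter_par_root. Qed.

Lemma anc_neq_root w y : w != e -> anc par w y -> y != e.
Proof. by move=> w_e; apply: contraTneq => ->; apply: contraNN w_e => /anc_of_root->. Qed.

Lemma anc_incomparable a w y :
  ~~ anc par a w -> ~~ anc par w a -> anc par w y -> ~~ anc par a y.
Proof.
move=> aw wa wy; apply/negP => ay.
by case/orP: (anc_total ay wy); apply/negP.
Qed.

Section Solution.
Variable D : {set V}.

Lemma nearest_origin_exists x : x != e -> exists a, nearest_origin e par D a x.
Proof.
move=> x_e.
have ex_origin : exists k, (0 < k) && origin_pt e D (iter k par x).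
  case: tree => _ /(_ x) [[|m] m_e]; first by rewrite -m_e eqxx in x_e.
  by exists m.+1; rewrite /origin_pt m_e eqxx orbT.
case: (ex_minnP ex_origin) => k /andP[k_gt0 origin_k] k_min.
exists (iter k par x); apply/and3P; split => //.
  rewrite /sanc; apply/andP; split; first by apply/ancP; exists k.
  by apply: contra x_e => /eqP/(iter_par_cycle k_gt0)->.
apply/forallP => y; apply/implyP => /andP[/andP[ky ky_neq] /andP[/ancP[j yj] y_x]].
apply/negP => origin_y.
have j_gt0 : 0 < j by case: j yj => // yj; rewrite -yj eqxx in y_x.
have le_kj : k <= j by apply: k_min; rewrite j_gt0 yj.
have yk : anc par y (iter k par x).
  by apply/ancP; exists (j - k); rewrite -iterD subnK.
by rewrite (anc_antisym ky yk) eqxx in ky_neq.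
Qed.

Definition reaches x w :=
  [&& x != e, anc par w x &
      [forall y, (anc par w y && sanc par y x) ==> ~~ origin_pt e D y]].

Lemma path_hitsE x w : path_hits e par D x w = reaches x w.
Proof.
apply/existsP/idP.
  case=> a /andP[/andP[/and3P[/andP[ax a_neq] _ near] /andP[aw aw_neq]] wx].
  apply/and3P; split => //.
    by apply: contraNneq a_neq => x_e; rewrite x_e in ax *; rewrite (anc_of_root ax).
  apply/forallP => y; apply/implyP => /andP[wy y_x].
  move/forallP: near => /(_ y) /implyP; apply; rewrite y_x andbT /sanc.
  rewrite (anc_trans aw wy) /=; apply: contraNneq aw_neq => ay.
  by rewrite ay in aw *; rewrite (anc_antisym aw wy).
case/and3P => x_e wx free.
case: (nearest_origin_exists x_e) => a near; exists a; rewrite near wx andbT /=.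
case/and3P: near => ax origin_a _.
case/orP: (anc_total (andP ax).1 wx) => [aw|wa].
  rewrite /sanc aw /=; apply: contraTneq isT => a_w; rewrite a_w in ax origin_a.
  by move/forallP/(_ w)/implyP: free; rewrite anc_refl ax origin_a => /(_ isT).
by move/forallP/(_ a)/implyP: free; rewrite wa ax origin_a => /(_ isT).
Qed.

Lemma pnE (R : {set V}) w : pn e par R D w = #|[set x | (x \in R :|: D) && reaches x w]|.
Proof.
by apply: eq_card => x; rewrite !inE path_hitsE /reaches; case: (x != e); rewrite ?andbF.
Qed.

End Solution.

Lemma pn_subtree_local (R D D' : {set V}) w : w != e ->
  (forall y, anc par w y -> (y \in D) = (y \in D')) ->
  pn e par R D w = pn e par R D' w.
Proof.
move=> w_e eqD; rewrite !pnE; apply: eq_card => x; rewrite !inE /reaches.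
case wx: (anc par w x); rewrite ?andbF //= eqD //.
congr (_ && (_ && _)); apply: eq_forallb => y.
by case wy: (anc par w y); rewrite //= /origin_pt eqD.
Qed.

Section Child.
Variables (u c : V).
Hypotheses (u_neq_root : u != e) (c_child : child e par c u).

Lemma child_neq_root : c != e. Proof. by case/andP: c_child. Qed.
Lemma par_child : par c = u. Proof. by case/andP: c_child => _ /eqP. Qed.
Lemma anc_par_child : anc par u c. Proof. by rewrite -par_child anc_par. Qed.

Lemma child_not_anc_par : ~~ anc par c u.
Proof.
apply/negP => cu; have u_c := anc_antisym anc_par_child cu.
have c_root : c = e by apply: (@iter_par_cycle 1) => //=; rewrite par_child u_c.
by move: child_neq_root; rewrite c_root eqxx.
Qed.

Lemma anc_subtree_child x : anc par c x -> anc par u x.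
Proof. exact: anc_trans anc_par_child. Qed.

Lemma anc_child_or_par w : anc par w c -> (w == c) || anc par w u.
Proof. by case: eqVneq => //= wc cw; rewrite -par_child anc_par_neq. Qed.

Lemma anc_between_child y x :
  anc par c x -> anc par y x -> anc par u y -> y != u -> anc par c y.
Proof.
move=> cx yx uy y_neq; case/orP: (anc_total yx cx) => // /anc_child_or_par.
case/orP => [/eqP->|yu]; first exact: anc_refl.
by rewrite (anc_antisym yu uy) eqxx in y_neq.
Qed.

Lemma anc_outside_child w : anc par u w -> ~~ anc par c w -> w != u -> ~~ anc par w c.
Proof.
move=> uw cw w_neq; apply/negP => /anc_child_or_par /orP[/eqP wc|wu].
  by rewrite wc anc_refl in cw.
by rewrite (anc_antisym wu uw) eqxx in w_neq.
Qed.

Lemma reaches_par_child D x :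
  anc par c x -> reaches D x u = (u \notin D) && reaches D x c.
Proof.
move=> cx; rewrite /reaches cx anc_subtree_child //=.
case: (x != e); rewrite ?andbF //=.
have ux : sanc par u x.
  rewrite /sanc anc_subtree_child //=; apply: contraNneq child_not_anc_par => u_x.
  by rewrite u_x.
apply/forallP/idP => [free|/andP[u_D free] y].
  apply/andP; split.
    by move: (free u); rewrite anc_refl ux /origin_pt negb_or => /andP[].
  apply/forallP => y; apply/implyP => /andP[cy yx]; move: (free y).
  by rewrite anc_subtree_child // yx.
apply/implyP => /andP[uy yx]; case: (eqVneq y u) => [->|y_neq].
  by rewrite /origin_pt negb_or u_D.
by move/forallP/(_ y): free; rewrite (anc_between_child cx (andP yx).1) // yx.
Qed.

Lemma subtree_par_child : subtree par c \subset subtree par u.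
Proof. by apply/subsetP => x; rewrite !inE; apply: anc_subtree_child. Qed.

Lemma pn_par_child_split (R D : {set V}) : pn e par R D u =
  (if u \in D then 0 else pn e par R D c) +
  #|[set x | (x \in R :|: D) && reaches D x u] :\: subtree par c|.
Proof.
rewrite pnE -(cardsID (subtree par c)); congr (_ + _).
have -> : [set x | (x \in R :|: D) && reaches D x u] :&: subtree par c =
          if u \in D then set0 else [set x | (x \in R :|: D) && reaches D x c].
  apply/setP => x; rewrite !inE.
  case cx: (anc par c x); rewrite ?andbT ?andbF ?reaches_par_child //.
    by case: (u \in D); rewrite ?inE ?andbF.
  by case: (u \in D); rewrite ?inE // /reaches cx !andbF.
by case: (u \in D); rewrite ?cards0 -?pnE.
Qed.

Lemma pn_par_child (R D D' : {set V}) :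
  (forall y, anc par u y -> ~~ anc par c y -> (y \in D) = (y \in D')) ->
  pn e par R D c = pn e par R D' c -> pn e par R D u = pn e par R D' u.
Proof.
move=> eqD eq_pn; rewrite !pn_par_child_split.
have u_D : (u \in D) = (u \in D') by rewrite eqD ?anc_refl ?child_not_anc_par.
congr (_ + _); first by rewrite u_D eq_pn.
apply: eq_card => x; rewrite !inE.
case cx: (anc par c x) => //=.
case ux: (anc par u x); last by rewrite /reaches ux !andbF.
rewrite eqD ?cx //; congr (_ && _); rewrite /reaches; congr (_ && (_ && _)).
apply: eq_forallb => y; case uy: (anc par u y) => //=.
case yx: (sanc par y x) => //=.
have cy : ~~ anc par c y by apply: contraFN cx => /anc_trans; apply; case/andP: yx.
by rewrite /origin_pt eqD.
Qed.

Lemma load_par_child (R D : {set V}) : load e par R D u =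
  pn e par R D u + load e par R D c +
  \sum_(w in subtree par u :\: subtree par c | w != u) pn e par R D w.
Proof.
rewrite /load (big_setID (subtree par c)) /= (setIidPr subtree_par_child).
rewrite [X in _ + X](bigD1 u) /=; last by rewrite !inE anc_refl child_not_anc_par.
by rewrite addnA [pn _ _ _ _ _ + _]addnC.
Qed.

Section Graft.
Variables (R D D' : {set V}).

Definition graft := (D :\: subtree par c) :|: (D' :&: subtree par c).

Lemma in_graft_subtree y : anc par c y -> (y \in graft) = (y \in D').
Proof. by move=> cy; rewrite !inE cy andbT. Qed.

Lemma in_graft_outside y : ~~ anc par c y -> (y \in graft) = (y \in D).
Proof. by move=> cy; rewrite !inE (negbTE cy) andbF orbF. Qed.

Lemma load_graft_child : load e par R graft c = load e par R D' c.
Proof.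
apply: eq_bigr => w; rewrite inE => cw.
apply: pn_subtree_local (anc_neq_root child_neq_root cw) _ => y wy.
exact/in_graft_subtree/(anc_trans cw).
Qed.

Lemma pn_graft_par : pn e par R D' c = pn e par R D c ->
  pn e par R graft u = pn e par R D u.
Proof.
move=> eq_pn; apply: pn_par_child => [y _ /in_graft_outside //|].
rewrite -eq_pn; apply: pn_subtree_local child_neq_root _ => y.
exact: in_graft_subtree.
Qed.

Lemma card_graft : #|D' :&: subtree par c| = #|D :&: subtree par c| ->
  #|graft :&: subtree par u| = #|D :&: subtree par u|.
Proof.
move=> eq_card_c.
rewrite -(cardsID (subtree par c) (graft :&: _)) -(cardsID (subtree par c) (D :&: _)).
rewrite -!setIA (setIidPr subtree_par_child).
congr (_ + _); last first.
  by apply: eq_card => x; rewrite !inE; case: (anc par c x); rewrite ?andbF ?orbF.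
apply: etrans eq_card_c; apply: eq_card => x; rewrite !inE.
by case: (anc par c x); rewrite ?andbF ?andbT.
Qed.

Lemma load_graft_par : pn e par R D' c = pn e par R D c ->
  load e par R graft u + load e par R D c = load e par R D u + load e par R D' c.
Proof.
move=> eq_pn; rewrite !load_par_child pn_graft_par // load_graft_child.
have -> : \sum_(w in subtree par u :\: subtree par c | w != u) pn e par R graft w =
          \sum_(w in subtree par u :\: subtree par c | w != u) pn e par R D w.
  apply: eq_bigr => w /andP[]; rewrite !inE => /andP[cw uw] w_neq.
  apply: pn_subtree_local (anc_neq_root u_neq_root uw) _ => y wy.
  by apply/in_graft_outside/(anc_incomparable cw (anc_outside_child uw cw w_neq)).
by rewrite addnAC [RHS]addnAC (addnAC (pn _ _ _ _ u)).
Qed.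
End Graft.

Lemma suboptimal_child (R D : {set V}) : suboptimal e par R D u -> suboptimal e par R D c.
Proof.
move=> opt D' /= eq_pn eq_card.
have := opt (graft D D') (pn_graft_par eq_pn) (card_graft eq_card).
by rewrite /= -(leq_add2r (load e par R D c)) load_graft_par // leq_add2l.
Qed.
End Child.
End RootedTree.

Theorem mainTheorem3 (V : finType) (e : V) (par : V -> V)
  (Htree : is_rooted_tree e par) (R : {set V})
  (HR : forall v : V, leaf e par v -> v \in R)
  (u : V) (Hu : u != e) (D : {set V}) :
  suboptimal e par R D u ->
  forall ui : V, child e par ui u -> suboptimal e par R D ui.
Proof. by move=> opt ui ui_child; apply: suboptimal_child opt. Qed.
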